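(* Let $n\ge 2$. Every matrix in the interior of the cone $\mathcal{CP}_n$ (interior taken in the space $\mathcal S_n$ of real symmetric $n\times n$ matrices) has infinitely many CP factorizations.
   Context: A symmetric $n\times n$ matrix $A$ is completely positive if $A=BB^T$ for some entrywise nonnegative $n\times k$ matrix $B$; such an equality is a CP factorization of $A$. $\mathcal{CP}_n$ denotes the convex cone of $n\times n$ completely positive matrices. Only CP factorizations in which the columns of $B$ are pairwise linearly independent are considered, and two CP factorizations $A=BB^T=CC^T$ are considered equal if $C=BP$ for a permutation matrix $P$. (Known fact, which may be used: the interior of $\mathcal{CP}_n$ consists exactly of the nonsingular matrices $A$ having a CP factorization $A=BB^T$ in which at least one column of $B$ is entrywise positive.) *)

From HB Require Import structures.
From mathcomp Require Import all_boot all_order all_algebra all_fingroup.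
From mathcomp Require Import reals.
Set Implicit Arguments. Unset Strict Implicit. Unset Printing Implicit Defensive.
Import Order.TTheory GRing.Theory Num.Theory.
Local Open Scope ring_scope.

Definition nonneg_mx (R : realType) (m k : nat) (B : 'M[R]_(m, k)) : Prop :=
  forall i j, 0 <= B i j.

Definition CP_factorization (R : realType) (n k : nat)
  (A : 'M[R]_n) (B : 'M[R]_(n, k)) : Prop :=
  nonneg_mx B /\ A = B *m B^T.

Definition pairwise_lin_indep_cols (R : realType) (n k : nat)
  (B : 'M[R]_(n, k)) : Prop :=
  forall i j : 'I_k, i != j ->
    forall a b : R, a *: col i B + b *: col j B = 0 -> a = 0 /\ b = 0.

Definition completely_positive (R : realType) (n : nat) (A : 'M[R]_n) : Prop :=
  exists k (B : 'M[R]_(n, k)), CP_factorization A B.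

(* A lies in the interior of CP_n, taken in the space S_n of real
   symmetric n x n matrices (topology of the max-entry norm; all norms
   on the finite-dimensional space S_n are equivalent). *)
Definition in_interior_CP (R : realType) (n : nat) (A : 'M[R]_n) : Prop :=
  A^T = A /\ completely_positive A /\
  exists2 eps : R, 0 < eps &
    forall M : 'M[R]_n, M^T = M ->
      (forall i j, `|M i j - A i j| < eps) -> completely_positive M.

Definition factor (R : realType) (n : nat) := {k : nat & 'M[R]_(n, k)}.

Definition factor_equiv (R : realType) (n : nat) (F G : factor R n) : Prop :=
  exists e : projT1 F = projT1 G,
    exists s : 'S_(projT1 G),
      projT2 G = castmx (erefl n, e) (projT2 F) *m perm_mx s.

From HB Require Import structures.
From mathcomp Require Import all_boot all_order all_algebra all_fingroup.
From mathcomp Require Import reals.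
From Stdlib Require Import ClassicalEpsilon.
From mathcomp Require Import lra.
Import Order.TTheory GRing.Theory Num.Theory.
Local Open Scope ring_scope.
Set Implicit Arguments. Unset Strict Implicit.

(* A column v >= 0, v <> 0, spans the ray of its "direction", v scaled to
   entry sum 1; a factorization with pairwise independent columns has
   pairwise distinct column directions, and equivalent factorizations
   (equal up to a column permutation) have the same set of directions.

   1. Merging parallel columns: any sum of rank-one terms v v^T with v >= 0
      equals B B^T for a nonnegative B with pairwise independent columns
      whose directions are exactly those of the nonzero v's.
   2. If A is interior and u >= 0, then A - d u u^T is CP for small d > 0,
      so A = B0 B0^T + (sqrt d u)(sqrt d u)^T; merging yields a factorization
      of A with pairwise independent columns, one of them in direction u.
   3. The probes (1, t+1, ..., t+1) have pairwise distinct directions when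
      n >= 2, so some probe direction avoids any finite list.
   4. Choosing at each stage a probe direction avoiding all directions used
      so far produces a sequence of factorizations with pairwise distinct
      direction sets, hence pairwise inequivalent. *)

Section Columns.
Variables (R : numFieldType) (n : nat).
Implicit Types (u v : 'cV[R]_n) (c : R).

Definition nonneg_col v : Prop := forall i, 0 <= v i 0.

Definition colsum v : R := \sum_i v i 0.

(* The direction of v: v rescaled to entry sum 1 (meaningful for v >= 0, v <> 0). *)
Definition direction v : 'cV[R]_n := (colsum v)^-1 *: v.

Definition outer v : 'M[R]_n := \matrix_(a, b) (v a 0 * v b 0).

Lemma colsum0 : colsum 0 = 0.
Proof. by rewrite /colsum big1 // => i _; rewrite mxE. Qed.

Lemma colsumD u v : colsum (u + v) = colsum u + colsum v.
Proof. by rewrite /colsum -big_split; apply: eq_bigr => i _; rewrite mxE. Qed.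

Lemma colsumZ c v : colsum (c *: v) = c * colsum v.
Proof. by rewrite /colsum mulr_sumr; apply: eq_bigr => i _; rewrite mxE. Qed.

Lemma entry_le_colsum v i : nonneg_col v -> v i 0 <= colsum v.
Proof.
move=> v_ge0; rewrite /colsum (bigD1 i) //= lerDl.
by apply: sumr_ge0 => j _; apply: v_ge0.
Qed.

Lemma colsum_gt0 v : nonneg_col v -> v != 0 -> 0 < colsum v.
Proof.
move=> v_ge0 v_neq0; rewrite lt0r sumr_ge0 ?andbT //; apply/eqP => sum0.
move/eqP: v_neq0; apply; apply/matrixP => i j; rewrite ord1 mxE.
exact: (psumr_eq0P _ sum0).
Qed.

Lemma colsum_direction v : colsum v != 0 -> v = colsum v *: direction v.
Proof. by move=> sum_neq0; rewrite /direction scalerA divff // scale1r. Qed.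

Lemma colsum_of_direction v : colsum v != 0 -> colsum (direction v) = 1.
Proof. by move=> sum_neq0; rewrite /direction colsumZ mulVf. Qed.

Lemma direction_id v : colsum v = 1 -> direction v = v.
Proof. by move=> sum1; rewrite /direction sum1 invr1 scale1r. Qed.

Lemma directionZ c v : c != 0 -> direction (c *: v) = direction v.
Proof.
move=> c_neq0; rewrite /direction colsumZ scalerA.
have [->|sum_neq0] := eqVneq (colsum v) 0; first by rewrite mulr0 invr0 mul0r !scale0r.
by rewrite invfM mulrAC mulVf ?mul1r.
Qed.

Lemma nonneg_direction v : nonneg_col v -> nonneg_col (direction v).
Proof.
move=> v_ge0 i; rewrite mxE mulr_ge0 // invr_ge0 /colsum.
by apply: sumr_ge0 => j _; apply: v_ge0.
Qed.

Lemma outerZ c v : outer (c *: v) = c ^+ 2 *: outer v.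
Proof.
apply/matrixP => a b; rewrite !mxE expr2.
by rewrite -!mulrA; congr (_ * _); rewrite mulrCA.
Qed.

Lemma outer0 : outer 0 = 0.
Proof. by apply/matrixP => a b; rewrite !mxE mul0r. Qed.

Lemma tr_outer v : (outer v)^T = outer v.
Proof. by apply/matrixP => a b; rewrite !mxE mulrC. Qed.

Lemma gram_sum_outer k (B : 'M[R]_(n, k)) : B *m B^T = \sum_(j < k) outer (col j B).
Proof.
apply/matrixP => a b; rewrite summxE mxE; apply: eq_bigr => j _.
by rewrite !mxE.
Qed.

Definition col_directions k (B : 'M[R]_(n, k)) : seq 'cV[R]_n :=
  [seq direction (col j B) | j : 'I_k].

Lemma col_directions_perm k (B : 'M[R]_(n, k)) (s : 'S_k) :
  col_directions (B *m perm_mx s) =i col_directions B.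
Proof.
have colE j : col j (B *m perm_mx s) = col ((s^-1)%g j) B.
  by rewrite -[in LHS](invgK s) -col_permE; apply/matrixP => a b; rewrite !mxE.
move=> x; apply/mapP/mapP => -[j _ ->].
  by exists ((s^-1)%g j); rewrite ?mem_enum // colE.
by exists (s j); rewrite ?mem_enum // colE permK.
Qed.

End Columns.

Section Merge.
Variables (R : realType) (n : nat).
Implicit Types (s : seq 'cV[R]_n) (v d : 'cV[R]_n).

Definition mx_of_seq s : 'M[R]_(n, size s) := \matrix_(i, j) (s`_j) i 0.

Lemma col_mx_of_seq s (j : 'I_(size s)) : col j (mx_of_seq s) = s`_j.
Proof. by apply/matrixP => i k; rewrite ord1 !mxE. Qed.

Lemma gram_mx_of_seq s : mx_of_seq s *m (mx_of_seq s)^T = \sum_(v <- s) outer v.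
Proof.
rewrite gram_sum_outer (big_nth 0) big_mkord.
by apply: eq_bigr => j _; rewrite col_mx_of_seq.
Qed.

(* Distinct directions carrying nonzero weights give pairwise independent
   columns: a relation a w1 d1 + b w2 d2 = 0 has a w1 + b w2 = 0 after
   summing entries, hence (a w1) (d1 - d2) = 0. *)
Lemma indep_cols_of_directions (D : seq 'cV[R]_n) (w : 'cV[R]_n -> R) :
  uniq D -> (forall d, d \in D -> colsum d = 1 /\ w d != 0) ->
  pairwise_lin_indep_cols (mx_of_seq [seq w d *: d | d <- D]).
Proof.
move=> D_uniq hD i j i_neq_j a b.
have sizeE : size [seq w d *: d | d <- D] = size D by rewrite size_map.
have colE (k : 'I_(size [seq w d *: d | d <- D])) :
    col k (mx_of_seq [seq w d *: d | d <- D]) = w D`_k *: D`_k.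
  by rewrite col_mx_of_seq (nth_map 0) // -sizeE.
have iD : D`_i \in D by rewrite mem_nth // -sizeE.
have jD : D`_j \in D by rewrite mem_nth // -sizeE.
have [sum_i wi_neq0] := hD _ iD; have [sum_j wj_neq0] := hD _ jD.
have Di_neq_Dj : D`_i != D`_j by rewrite nth_uniq // -sizeE.
rewrite !colE !scalerA; set x := a * _; set y := b * _ => rel0.
have y_opp : y = - x.
  by have := congr1 (@colsum _ _) rel0; rewrite colsumD !colsumZ sum_i sum_j colsum0; lra.
move: rel0; rewrite y_opp scaleNr -scalerBr => /eqP.
rewrite scaler_eq0 subr_eq0 (negbTE Di_neq_Dj) orbF => /eqP x0.
move: y_opp; rewrite x0 oppr0 => /eqP; rewrite mulf_eq0 (negbTE wj_neq0) orbF.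
by move/eqP: x0; rewrite mulf_eq0 (negbTE wi_neq0) orbF => /eqP -> /eqP ->.
Qed.

Definition seq_directions s : seq 'cV[R]_n := undup [seq direction v | v <- s & v != 0].

Definition weight s d : R := \sum_(v <- s | (v != 0) && (direction v == d)) colsum v ^+ 2.

Lemma weight_gt0 s d : (forall v, v \in s -> nonneg_col v) ->
  d \in seq_directions s -> 0 < weight s d.
Proof.
move=> s_ge0; rewrite mem_undup => /mapP[v]; rewrite mem_filter => /andP[v_neq0 vs] ->.
have v_ge0 := s_ge0 v vs.
rewrite /weight (big_rem v) //= v_neq0 eqxx ltr_wpDr ?exprn_gt0 ?colsum_gt0 //.
by apply: sumr_ge0 => u _; apply: sqr_ge0.
Qed.

Lemma sum_outer_by_direction s : (forall v, v \in s -> nonneg_col v) ->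
  \sum_(v <- s) outer v = \sum_(d <- seq_directions s) weight s d *: outer d.
Proof.
move=> s_ge0; rewrite /weight.
under [RHS]eq_bigr do rewrite scaler_suml big_mkcond.
rewrite exchange_big; apply: eq_big_seq => v vs /=.
have [->|v_neq0] := eqVneq v 0; first by rewrite outer0 big1 // => d _; rewrite eqxx.
have sum_neq0 : colsum v != 0 by rewrite gt_eqF // colsum_gt0 //; apply: s_ge0.
have dir_in : direction v \in seq_directions s.
  by rewrite mem_undup; apply: map_f; rewrite mem_filter v_neq0.
rewrite (bigD1_seq (direction v)) ?undup_uniq //= eqxx big1 ?addr0.
  by rewrite -outerZ -colsum_direction.
by move=> d; rewrite eq_sym => /negbTE ->.
Qed.

Lemma merge_parallel s : (forall v, v \in s -> nonneg_col v) ->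
  exists k (B : 'M[R]_(n, k)),
    [/\ nonneg_mx B, B *m B^T = \sum_(v <- s) outer v,
        pairwise_lin_indep_cols B &
        forall v, v \in s -> v != 0 -> direction v \in col_directions B].
Proof.
move=> s_ge0; set D := seq_directions s.
have dirD d : d \in D -> colsum d = 1 /\ nonneg_col d.
  rewrite mem_undup => /mapP[v]; rewrite mem_filter => /andP[v_neq0 vs] ->.
  split; last by apply: nonneg_direction; apply: s_ge0.
  by apply: colsum_of_direction; rewrite gt_eqF // colsum_gt0 //; apply: s_ge0.
have sqrt_neq0 d : d \in D -> Num.sqrt (weight s d) != 0.
  by move=> dD; rewrite gt_eqF // sqrtr_gt0 weight_gt0.
set cols := [seq Num.sqrt (weight s d) *: d | d <- D].
exists (size cols), (mx_of_seq cols); split.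
- move=> i j; rewrite mxE; have /mapP[d dD ->] : cols`_j \in cols by apply: mem_nth.
  by rewrite mxE mulr_ge0 ?sqrtr_ge0 //; apply: (dirD d dD).2.
- rewrite gram_mx_of_seq big_map sum_outer_by_direction //.
  by apply: eq_bigr => d _; rewrite outerZ sqr_sqrtr // /weight sumr_ge0 // => v _; apply: sqr_ge0.
- apply: indep_cols_of_directions; first exact: undup_uniq.
  by move=> d dD; split; [apply: (dirD d dD).1 | apply: sqrt_neq0].
- move=> v vs v_neq0.
  have dD : direction v \in D by rewrite mem_undup; apply: map_f; rewrite mem_filter v_neq0.
  have idx : (index (direction v) D < size cols)%N by rewrite size_map index_mem.
  apply/mapP; exists (Ordinal idx); rewrite ?mem_enum //.
  rewrite col_mx_of_seq (nth_map 0) ?index_mem //= nth_index //.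
  by rewrite directionZ ?sqrt_neq0 // [RHS]direction_id //; apply: (dirD _ dD).1.
Qed.

End Merge.

Section Interior.
Variables (R : realType) (n : nat).
Implicit Types (A : 'M[R]_n) (u : 'cV[R]_n).

(* An interior matrix stays CP after subtracting a small multiple of u u^T:
   the entries of d u u^T are at most d (sum u)^2, below the interior radius. *)
Lemma interior_perturb A u : in_interior_CP A -> nonneg_col u ->
  exists2 d : R, 0 < d & completely_positive (A - d *: outer u).
Proof.
move=> [A_sym [_ [eps eps_gt0 ball_CP]]] u_ge0.
set c := colsum u; have c2_gt0 : 0 < c ^+ 2 + 1 by rewrite ltr_pwDr ?sqr_ge0.
exists (eps / (c ^+ 2 + 1)); first by rewrite divr_gt0.
apply: ball_CP => [|i j]; first by rewrite linearB linearZ /= A_sym tr_outer.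
have [ui_le uj_le] := (entry_le_colsum i u_ge0, entry_le_colsum j u_ge0).
rewrite !mxE addrAC subrr add0r normrN ger0_norm; last first.
  by apply: mulr_ge0; [rewrite divr_ge0 ?ltW | apply: mulr_ge0].
rewrite mulrAC ltr_pdivrMr // ltr_pM2l //.
have le_c2 : u i 0 * u j 0 <= c ^+ 2 by rewrite expr2 ler_pM ?u_ge0.
by apply: le_lt_trans le_c2 _; rewrite ltrDl.
Qed.

Lemma factorization_with_direction A u :
  in_interior_CP A -> nonneg_col u -> u != 0 ->
  exists F : factor R n,
    [/\ CP_factorization A (projT2 F), pairwise_lin_indep_cols (projT2 F) &
        direction u \in col_directions (projT2 F)].
Proof.
move=> A_int u_ge0 u_neq0.
have [d d_gt0 [k0 [B0 [B0_ge0 B0E]]]] := interior_perturb A_int u_ge0.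
have sqrt_neq0 : Num.sqrt d != 0 by rewrite gt_eqF // sqrtr_gt0.
set s := [seq col j B0 | j : 'I_k0] ++ [:: Num.sqrt d *: u].
have s_ge0 v : v \in s -> nonneg_col v.
  rewrite mem_cat mem_seq1 => /orP[/mapP[j _ ->] i | /eqP-> i]; rewrite mxE //.
  by rewrite mulr_ge0 ?sqrtr_ge0.
have [k [B [B_ge0 BE B_indep B_dirs]]] := merge_parallel s_ge0.
exists (existT _ k B); split=> //=.
  split=> //; rewrite BE big_cat big_seq1 big_image /= -gram_sum_outer -B0E.
  by rewrite outerZ sqr_sqrtr ?ltW // subrK.
rewrite -(directionZ u sqrt_neq0) B_dirs // ?mem_cat ?mem_seq1 ?eqxx ?orbT //.
by rewrite scaler_eq0 negb_or sqrt_neq0.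
Qed.

End Interior.

Section Probes.
Variables (R : realType) (n : nat).

Definition probe (t : nat) : 'cV[R]_n := \col_i (if val i == 0%N then 1 else t.+1%:R).

Lemma probe_nonneg t : nonneg_col (probe t).
Proof. by move=> i; rewrite mxE; case: ifP. Qed.

Lemma probe_neq0 t : (0 < n)%N -> probe t != 0.
Proof.
move=> n_gt0; apply/negP => /eqP/matrixP/(_ (Ordinal n_gt0) 0).
by rewrite !mxE /= => /eqP; rewrite oner_eq0.
Qed.

(* The ratio of the second to the first entry of direction (probe t) is t+1. *)
Lemma probe_direction_inj : (2 <= n)%N -> injective (fun t => direction (probe t)).
Proof.
move=> n_ge2; have n_gt0 : (0 < n)%N by apply: leq_trans n_ge2.
pose i0 := Ordinal n_gt0; pose i1 := Ordinal n_ge2.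
have ratio t : direction (probe t) i1 0 = t.+1%:R * direction (probe t) i0 0.
  by rewrite !mxE /= mulr1 mulrC.
have first_gt0 t : 0 < direction (probe t) i0 0.
  by rewrite !mxE /= mulr1 invr_gt0 colsum_gt0 ?probe_neq0 //; apply: probe_nonneg.
move=> t t' /= eq_dir; have := ratio t'; rewrite -eq_dir ratio => /mulIf.
by move=> /(_ (lt0r_neq0 (first_gt0 t)))/eqP; rewrite eqr_nat eqSS => /eqP.
Qed.

End Probes.

Lemma injective_avoids (T : eqType) (g : nat -> T) (L : seq T) :
  injective g -> exists t, g t \notin L.
Proof.
move=> g_inj; set S := [seq g t | t <- iota 0 (size L).+1].
have S_uniq : uniq S by rewrite map_inj_uniq ?iota_uniq.
have /allPn[_ /mapP[t _ ->] gt_notin] : ~~ all (mem L) S.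
  apply/negP => /allP S_sub; have := uniq_leq_size S_uniq S_sub.
  by rewrite size_map size_iota ltnn.
by exists t.
Qed.

(* Each term escapes the directions
   of all the earlier ones. *)
Lemma escaping_sequence (X : Type) (T : eqType) (P : X -> Prop) (dirs : X -> seq T) :
  (forall L : seq T, exists x, P x /\ exists2 y, y \in dirs x & y \notin L) ->
  exists f : nat -> X, (forall m, P (f m)) /\
    (forall m p, m <> p -> ~ dirs (f m) =i dirs (f p)).
Proof.
move=> escape.
pose G L := proj1_sig (constructive_indefinite_description _ (escape L)).
have GP L : P (G L) /\ exists2 y, y \in dirs (G L) & y \notin L.
  exact: proj2_sig (constructive_indefinite_description _ (escape L)).
pose fix used m := if m is m'.+1 then used m' ++ dirs (G (used m')) else [::].
have usedS m : used m.+1 = used m ++ dirs (G (used m)) by [].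
have used_mono m p : (m < p)%N -> {subset dirs (G (used m)) <= used p}.
  move=> lt_mp y y_in; elim: p lt_mp => // p IH.
  rewrite ltnS leq_eqVlt usedS mem_cat => /orP[/eqP<- | /IH ->] //.
  by rewrite y_in orbT.
exists (fun m => G (used m)); split=> [m | m p neq_mp eq_dirs]; first exact: (GP _).1.
wlog lt_mp : m p neq_mp eq_dirs / (m < p)%N.
  move=> hwlog; case: (ltngtP m p) => [lt_mp|lt_pm|//].
    exact: (hwlog m p).
  have neq_pm : p <> m by move/esym.
  by apply: (hwlog p m neq_pm _ lt_pm) => y; rewrite eq_dirs.
have [_ [y y_in y_notin]] := GP (used p).
have y_used : y \in used p by apply: (used_mono m p) => //; rewrite eq_dirs.
by rewrite y_used in y_notin.
Qed.

Lemma factor_equiv_col_directions (R : realType) (n : nat) (F G : factor R n) :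
  factor_equiv F G -> col_directions (projT2 G) =i col_directions (projT2 F).
Proof.
case: F G => [k B] [k' B'] [/= e]; case: k' / e B' => B' [s ->].
by rewrite castmx_id; apply: col_directions_perm.
Qed.

Theorem corollary3p3 (R : realType) (n : nat) (hn : (2 <= n)%N)
  (A : 'M[R]_n) (hA : in_interior_CP A) :
  exists f : nat -> factor R n,
    (forall t, CP_factorization A (projT2 (f t)) /\
               pairwise_lin_indep_cols (projT2 (f t))) /\
    (forall s t, s <> t -> ~ factor_equiv (f s) (f t)).
Proof.
have n_gt0 : (0 < n)%N by apply: leq_trans hn.
have escape (L : seq 'cV[R]_n) : exists F : factor R n,
    (CP_factorization A (projT2 F) /\ pairwise_lin_indep_cols (projT2 F)) /\
    exists2 y, y \in col_directions (projT2 F) & y \notin L.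
  have [t t_fresh] := injective_avoids L (probe_direction_inj (R := R) hn).
  have [F [F_cp F_indep F_dir]] :=
    factorization_with_direction hA (probe_nonneg R t) (probe_neq0 R t n_gt0).
  by exists F; split=> //; exists (direction (probe R n t)).
have [f [f_ok f_distinct]] := escaping_sequence escape.
exists f; split=> // s t neq_st equiv_st; apply: (f_distinct s t neq_st) => y.
by rewrite (factor_equiv_col_directions equiv_st).
Qed.
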